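(* Let $p\in(0,1)$, let $X,\gamma$ satisfy the standing assumptions in the context, and let $0\le x_0<\mathbb E[\gamma X]$. Then the problem of minimizing $\mathrm{VaR}_p(g(X))$ over $g\in\mathcal G_{\rm ns}$ admits at least one solution, and $\mathrm{VaR}_p(X)>q$, where $q=\inf\{\mathrm{VaR}_p(g(X)):g\in\mathcal G_{\rm ns}\}$.
   Context: $(\Omega,\mathcal F,\mathbb P)$ is atomless. $\mathrm{VaR}_p(Y)=\inf\{x:\mathbb P(Y\le x)\ge p\}$. Standing assumptions: $X\ge0$ is a random variable whose distribution has a positive density on its support; $\gamma:\mathbb R\to\mathbb R$ is continuous and strictly positive; $\gamma$ also denotes $\gamma(X)$; $\mathbb E[\gamma]=1$, $\mathbb E[\gamma X]<\infty$. With $\mathcal G_1$ the measurable functions $\mathbb R\to\mathbb R$, $\mathcal G_{\rm ns}=\{g\in\mathcal G_1:\mathbb E[\gamma g(X)]\ge x_0,\ 0\le g(X)\le X\}$. *)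

From HB Require Import structures.
From mathcomp Require Import all_boot all_order all_algebra.
From mathcomp Require Import all_classical all_reals all_analysis.
Set Implicit Arguments. Unset Strict Implicit. Unset Printing Implicit Defensive.
Import Order.TTheory GRing.Theory Num.Theory.
Import numFieldNormedType.Exports.
Local Open Scope classical_set_scope.
Local Open Scope ring_scope.

Definition atomless d (T : measurableType d) (R : realType)
  (P : probability T R) : Prop :=
  forall A : set T, measurable A -> (0 < P A)%E ->
    exists B : set T, [/\ measurable B, B `<=` A, (0 < P B)%E & (P B < P A)%E].

Definition VaR d (T : measurableType d) (R : realType)
  (P : probability T R) (p : R) (Y : T -> R) : R :=
  inf [set x : R | (p%:E <= P (Y @^-1` `]-oo, x]))%E].

Definition support_of d (T : measurableType d) (R : realType)
  (P : probability T R) (X : T -> R) : set R :=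
  [set x | forall e : R, 0 < e -> (0 < P (X @^-1` ball x e))%E].

Definition has_pos_density_on_support d (T : measurableType d) (R : realType)
  (P : probability T R) (X : T -> R) : Prop :=
  exists f : R -> R,
    [/\ measurable_fun setT f, (forall x, 0 <= f x),
        (forall A : set R, measurable A ->
            (P (X @^-1` A) = \int[lebesgue_measure]_(x in A) (f x)%:E)%E)
      & (forall x, support_of P X x -> 0 < f x)].

Definition G_ns d (T : measurableType d) (R : realType)
  (P : probability T R) (X : T -> R) (gamma : R -> R) (x0 : R) : set (R -> R) :=
  [set g | [/\ measurable_fun setT g,
     (x0%:E <= \int[P]_w (gamma (X w) * g (X w))%:E)%E &
     (forall w, 0 <= g (X w) <= X w)]].

(* Let q be the infimum of VaR_p(g(X)) over G_ns and h(x) = gamma(x) (x - q)^+.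
   Since X has no atoms, a Neyman-Pearson construction gives a set B with
   P(X in B) = p on which h(X) is below a threshold c and off which it is
   above c; hence B minimises E[h(X) 1_A] over the events A of probability at
   least p.  For g in G_ns with VaR_p(g(X)) <= q + e the event {g(X) <= q + e}
   is such an event, and pointwise h(X) 1_{g(X) <= q + e} + gamma g(X) <=
   gamma X + e gamma, so E[h(X) 1_B(X)] <= E[gamma X] - x0 + e for every e > 0.
   Therefore g*(x) = x - (x - q)^+ 1_B(x) is admissible, and g* <= q on B gives
   VaR_p(g*(X)) <= q.  For the strict inequality, v = VaR_p(X) > 0 because X
   has no atom at 0, and with delta = min(v, E[gamma X] - x0) the admissible
   payoff x - min(x, delta) has value-at-risk at most v - delta. *)

From HB Require Import structures.
From mathcomp Require Import all_boot all_order all_algebra.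
From mathcomp Require Import all_classical all_reals all_analysis.
From mathcomp Require Import lra measurable_realfun.
Import Order.TTheory GRing.Theory Num.Theory.
Import numFieldNormedType.Exports.
Local Open Scope classical_set_scope.
Local Open Scope ring_scope.

Lemma measurableT_preimage d d' (T : measurableType d) (U : measurableType d')
    (f : T -> U) (B : set U) :
  measurable_fun setT f -> measurable B -> measurable (f @^-1` B).
Proof. by move=> mf mB; rewrite -[f @^-1` B]setTI; exact: mf. Qed.

Lemma exists_natr_gt_norm {R : realType} (x : R) : exists n : nat, `|x| < n%:R.
Proof. by exists (Num.bound `|x|); exact: archi_boundP. Qed.

Section probability_events.
Context {d} {T : measurableType d} {R : realType} (P : probability T R).

(* [measureU] and [measureU2] restated through the coercion of [P] as a
   probability, so that they rewrite the terms [P A] of the statements below. *)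
Lemma probabilityU {A B : set T} : measurable A -> measurable B ->
  A `&` B = set0 -> P (A `|` B) = (P A + P B)%E.
Proof. exact: measureU. Qed.

Lemma probabilityU2 {A B : set T} : measurable A -> measurable B ->
  (P (A `|` B) <= P A + P B)%E.
Proof. exact: measureU2. Qed.

Section monotone_sequences.
Variable F : (set T)^nat.
Hypothesis mF : forall n, measurable (F n).

Lemma nondecreasing_bigcup_measure_le (m : \bar R) :
  {homo F : n k / (n <= k)%N >-> (n <= k)%O} ->
  (forall n, P (F n) <= m)%E -> (P (\bigcup_n F n) <= m)%E.
Proof.
move=> homF Fm; have mUF : measurable (\bigcup_n F n) by exact: bigcup_measurable.
have cvgF := nondecreasing_cvg_mu (mu := P) mF mUF homF.
rewrite -(cvg_lim _ cvgF) //; apply: lime_le; first by apply/cvg_ex; exists (P (\bigcup_n F n)).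
exact: nearW.
Qed.

Lemma nonincreasing_bigcap_measure_ge (m : \bar R) :
  {homo F : n k / (n <= k)%N >-> (k <= n)%O} ->
  (forall n, m <= P (F n))%E -> (m <= P (\bigcap_n F n))%E.
Proof.
move=> homF mF'; have mIF : measurable (\bigcap_n F n) by exact: bigcapT_measurable.
have PF0 : (P (F 0%N) < +oo)%E by rewrite (le_lt_trans (probability_le1 _ _)) ?ltry.
have cvgF := nonincreasing_cvg_mu (mu := P) PF0 mF mIF homF.
rewrite -(cvg_lim _ cvgF) //; apply: lime_ge; first by apply/cvg_ex; exists (P (\bigcap_n F n)).
exact: nearW.
Qed.

End monotone_sequences.

End probability_events.

Section sublevel_sets.
Context {d} {T : measurableType d} {R : realType} (P : probability T R).
Variables (E : set T) (Y : T -> R).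
Hypotheses (mE : measurable E) (mY : measurable_fun setT Y).

Local Notation K c := (E `&` Y @^-1` `]-oo, c]).

Lemma measurable_sublevel (c : R) : measurable (K c).
Proof. exact/measurableI/measurableT_preimage. Qed.

Lemma sublevel_le {c c' : R} : c <= c' -> K c `<=` K c'.
Proof.
move=> cc' w [Ew]; rewrite /preimage /= !in_itv /= => Ywc.
by split=> //; exact: le_trans cc'.
Qed.

Lemma sublevel_measure_le {c c' : R} : c <= c' -> (P (K c) <= P (K c'))%E.
Proof.
by move=> cc'; apply: le_measure; rewrite ?inE; [exact: measurable_sublevel..|exact: sublevel_le].
Qed.

Lemma sublevel_right_continuous (m : \bar R) (c0 : R) :
  (forall c, c0 < c -> (m <= P (K c))%E) -> (m <= P (K c0))%E.
Proof.
move=> Km; have -> : K c0 = \bigcap_n K (c0 + n.+1%:R^-1).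
  apply/seteqP; split=> [w Kw n _|w Kw]; first by apply: sublevel_le Kw; rewrite lerDl.
  have [Ew _] := Kw 0%N I; split=> //; rewrite /preimage /= in_itv /=.
  rewrite leNgt; apply/negP => /ltr_add_invr[k]; apply/negP; rewrite -leNgt.
  by have [_] := Kw k I; rewrite /preimage /= in_itv.
apply: nonincreasing_bigcap_measure_ge => [n|n k nk|n].
- exact: measurable_sublevel.
- by apply/subsetPset/sublevel_le; rewrite lerD2l lef_pV2 ?posrE ?ler_nat.
- by apply: Km; rewrite ltrDl invr_gt0.
Qed.

Lemma strict_sublevel_le (m : \bar R) (c0 : R) :
  (forall c, c < c0 -> (P (K c) <= m)%E) -> (P (E `&` Y @^-1` `]-oo, c0[) <= m)%E.
Proof.
move=> Km; have -> : E `&` Y @^-1` `]-oo, c0[ = \bigcup_n K (c0 - n.+1%:R^-1).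
  apply/seteqP; split=> [w [Ew]|w [n _ [Ew]]]; rewrite /preimage /= in_itv /=.
    move=> /ltr_add_invr[k Yk]; exists k => //; split=> //.
    by rewrite /preimage /= in_itv /= lerBrDr ltW.
  move=> Ywn; split=> //; rewrite /preimage /= in_itv /= (le_lt_trans Ywn) //.
  by rewrite ltrBlDr ltrDl.
apply: nondecreasing_bigcup_measure_le => [n|n k nk|n].
- exact: measurable_sublevel.
- by apply/subsetPset/sublevel_le; rewrite lerD2l lerN2 lef_pV2 ?posrE ?ler_nat.
- by apply: Km; rewrite ltrBlDr ltrDl invr_gt0.
Qed.

Lemma sublevel_bigcup_le (m : \bar R) :
  (forall c, P (K c) <= m)%E -> (P E <= m)%E.
Proof.
move=> Km; have -> : E = \bigcup_n K n%:R.
  apply/seteqP; split=> [w Ew|w [n _ []//]].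
  have [n Yn] := exists_natr_gt_norm (Y w); exists n => //; split=> //.
  by rewrite /preimage /= in_itv /= (le_trans (ler_norm _)) ?ltW.
apply: nondecreasing_bigcup_measure_le => [n|n k nk|n] //.
- exact: measurable_sublevel.
- by apply/subsetPset/sublevel_le; rewrite ler_nat.
Qed.

Lemma sublevel_bigcap_ge (m : \bar R) :
  (forall c, m <= P (K c))%E -> (m <= 0)%E.
Proof.
move=> Km; have K0 : \bigcap_n K (- n%:R) = set0.
  apply/seteqP; split=> // w Kw; have [n Yn] := exists_natr_gt_norm (Y w).
  have [_] := Kw n I; rewrite /preimage /= in_itv /= lerNr => Ywn.
  by rewrite -normrN in Yn; move: (le_lt_trans (le_trans Ywn (ler_norm _)) Yn); rewrite ltxx.
rewrite -(measure0 P) -K0; apply: nonincreasing_bigcap_measure_ge => [n|n k nk|n] //.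
- exact: measurable_sublevel.
- by apply/subsetPset/sublevel_le; rewrite lerN2 ler_nat.
Qed.

Definition quantile (m : R) : R := inf [set c | (m%:E <= P (K c))%E].

Section quantile_level.
Variable m : R.
Hypotheses (m_gt0 : 0 < m) (m_lt : (m%:E < P E)%E).

Let quantile_set_neq0 : [set c | (m%:E <= P (K c))%E] !=set0.
Proof.
apply: contrapT => /forallNP S0; move: m_lt; apply/negP; rewrite -leNgt.
by apply: sublevel_bigcup_le => c; move/negP: (S0 c); rewrite -ltNge => /ltW.
Qed.

Let quantile_set_lbound : has_lbound [set c | (m%:E <= P (K c))%E].
Proof.
have [t Kt] : exists t, (P (K t) < m%:E)%E.
  apply: contrapT => /forallNP Km; move: m_gt0; apply/negP; rewrite -leNgt -lee_fin.
  by apply: sublevel_bigcap_ge => c; move/negP: (Km c); rewrite -leNgt.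
exists t => c /= Kc; rewrite leNgt; apply/negP => ct.
by move: (le_lt_trans (sublevel_measure_le (ltW ct)) Kt); rewrite ltNge Kc.
Qed.

Lemma quantile_le c : (m%:E <= P (K c))%E -> quantile m <= c.
Proof. by move=> Kc; apply: ge_inf => //; exact: quantile_set_lbound. Qed.

Lemma quantile_attained : (m%:E <= P (K (quantile m)))%E.
Proof.
apply: sublevel_right_continuous => c qc.
have [y Ky yc] := inf_lt quantile_set_neq0 qc.
exact: le_trans Ky (sublevel_measure_le (ltW yc)).
Qed.

Lemma quantile_strict_le : (P (E `&` Y @^-1` `]-oo, quantile m[) <= m%:E)%E.
Proof.
apply: strict_sublevel_le => c cq; rewrite leNgt; apply/negP => /ltW Kc.
by move: cq; rewrite ltNge quantile_le.
Qed.

End quantile_level.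

End sublevel_sets.

Section value_at_risk.
Context {d} {T : measurableType d} {R : realType} (P : probability T R).
Variables (Y : T -> R) (p : R).
Hypotheses (mY : measurable_fun setT Y) (p01 : 0 < p < 1).

Let p_gt0 : 0 < p. Proof. by case/andP: p01. Qed.

Let p_lt : (p%:E < P setT)%E.
Proof. by rewrite probability_setT lte_fin; case/andP: p01. Qed.

Lemma VaR_quantile : VaR P p Y = quantile P setT Y p.
Proof. by rewrite /VaR /quantile; congr inf; apply/funext => c /=; rewrite setTI. Qed.

Lemma VaR_leP c : VaR P p Y <= c <-> (p%:E <= P (Y @^-1` `]-oo, c]))%E.
Proof.
rewrite VaR_quantile -[Y @^-1` _]setTI; split=> [vc|]; last exact: quantile_le.
apply: le_trans (quantile_attained P _ _ measurableT mY _ p_lt) _.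
exact: sublevel_measure_le.
Qed.

Lemma VaR_strict_le : (P (Y @^-1` `]-oo, VaR P p Y[) <= p%:E)%E.
Proof. by rewrite VaR_quantile -[Y @^-1` _]setTI; exact: quantile_strict_le. Qed.

Lemma VaR_ge0 : (forall w, 0 <= Y w) -> 0 <= VaR P p Y.
Proof.
move=> Y0; rewrite leNgt; apply/negP => v0.
have := (VaR_leP (VaR P p Y)).1 (lexx _).
rewrite (_ : Y @^-1` _ = set0) ?measure0 ?lee_fin ?leNgt ?p_gt0 //.
apply/seteqP; split=> // w; rewrite /preimage /= in_itv /= => Yw.
by move: (le_lt_trans (le_trans (Y0 w) Yw) v0); rewrite ltxx.
Qed.

Lemma VaR_gt0 : (forall w, 0 <= Y w) -> P (Y @^-1` [set 0]) = 0%E -> 0 < VaR P p Y.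
Proof.
move=> Y0 Y0_null; rewrite ltNge; apply/negP => /VaR_leP p_le.
suff : (p%:E <= 0)%E by rewrite lee_fin leNgt p_gt0.
rewrite -Y0_null; apply: le_trans p_le _; apply: le_measure; rewrite ?inE.
- exact: measurableT_preimage.
- exact: measurableT_preimage.
by move=> w; rewrite /preimage /= in_itv /= => Yw0; apply/le_anti; rewrite Yw0 Y0.
Qed.

End value_at_risk.

Section nonnegative_integrals.
Context {d} {T : measurableType d} {R : realType} (mu : {measure set T -> \bar R}).
Implicit Types u v : T -> R.

Lemma ge0_integralD_EFin u v :
  measurable_fun setT u -> measurable_fun setT v ->
  (forall w, 0 <= u w) -> (forall w, 0 <= v w) ->
  (\int[mu]_w (u w + v w)%:E = \int[mu]_w (u w)%:E + \int[mu]_w (v w)%:E)%E.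
Proof.
move=> mfu mfv u0 v0; under eq_integral do rewrite EFinD.
by apply: ge0_integralD => // [w _||w _|]; rewrite ?lee_fin //; exact/measurable_EFinP.
Qed.

Lemma ge0_le_integral_EFin u v :
  measurable_fun setT u -> measurable_fun setT v ->
  (forall w, 0 <= u w) -> (forall w, u w <= v w) ->
  (\int[mu]_w (u w)%:E <= \int[mu]_w (v w)%:E)%E.
Proof.
move=> mfu mfv u0 uv.
by apply: ge0_le_integral => // [w _|||w _]; rewrite ?lee_fin //; exact/measurable_EFinP.
Qed.

Lemma ge0_integralZl_EFinM (k : R) u :
  0 <= k -> measurable_fun setT u -> (forall w, 0 <= u w) ->
  (\int[mu]_w (k * u w)%:E = k%:E * \int[mu]_w (u w)%:E)%E.
Proof.
move=> k0 mfu u0; under eq_integral do rewrite EFinM.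
by apply: ge0_integralZl_EFin => // [w _|]; rewrite ?lee_fin //; exact/measurable_EFinP.
Qed.

Lemma integral_scaled_indic (k : R) (A : set T) :
  0 <= k -> measurable A -> (\int[mu]_w (k * \1_A w)%:E = k%:E * mu A)%E.
Proof.
by move=> k0 mA; rewrite ge0_integralZl_EFinM ?integral_indic ?setIT //; exact: measurable_indic.
Qed.

End nonnegative_integrals.

Section neyman_pearson.
Context {d} {T : measurableType d} {R : realType} (P : probability T R).

Lemma exists_preimage_measure (X : T -> R) (E : set T) (m : R) :
  measurable_fun setT X -> measurable E ->
  (forall t, P (X @^-1` [set t]) = 0%E) -> 0 <= m -> (m%:E <= P E)%E ->
  exists2 B : set R, measurable B & P (E `&` X @^-1` B) = m%:E.
Proof.
move=> mX mE X_atomless m_ge0 mPE.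
have [->|m_neq0] := eqVneq m 0.
  by exists set0; rewrite // preimage_set0 setI0 measure0.
have [->|PE_neqm] := eqVneq (m%:E) (P E).
  by exists setT; rewrite // preimage_setT setIT.
have m_gt0 : 0 < m by rewrite lt_neqAle eq_sym m_neq0.
have m_lt : (m%:E < P E)%E by rewrite lt_neqAle PE_neqm.
set c := quantile P E X m.
exists [set` `]-oo, c]]; first exact: measurable_itv.
apply/le_anti; rewrite quantile_attained // andbT.
have mlt : measurable (E `&` X @^-1` `]-oo, c[) by exact/measurableI/measurableT_preimage.
have mc : measurable (X @^-1` [set c]) by exact: measurableT_preimage.
apply: (@le_trans _ _ (P ((E `&` X @^-1` `]-oo, c[) `|` X @^-1` [set c]))).
  apply: le_measure; rewrite ?inE; [exact: measurable_sublevel|exact: measurableU|].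
  move=> w [Ew]; rewrite /preimage /= in_itv /= le_eqVlt => /orP[/eqP ->|Xc].
    by right.
  by left; split=> //; rewrite /preimage /= in_itv.
apply: le_trans (probabilityU2 P mlt mc) _.
by rewrite X_atomless adde0 quantile_strict_le.
Qed.

(* [c] is the [p]-quantile of [h(X)], and [B] adds to [{h < c}] a part of the
   tie set [{h = c}] of the missing probability. *)
Lemma exists_neyman_pearson_set (X : T -> R) (h : R -> R) (p : R) :
  measurable_fun setT X -> measurable_fun setT h -> (forall x, 0 <= h x) ->
  (forall t, P (X @^-1` [set t]) = 0%E) -> 0 < p < 1 ->
  exists (B : set R) (c : R), [/\ measurable B, P (X @^-1` B) = p%:E, 0 <= c,
    (forall x, h x < c -> B x) & (forall x, B x -> h x <= c)].
Proof.
move=> mX mh h0 X_atomless p01.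
have mhX : measurable_fun setT (h \o X) := measurableT_comp mh mX.
set c := VaR P p (h \o X).
pose L := X @^-1` (h @^-1` `]-oo, c[).
pose L' := X @^-1` (h @^-1` [set c]).
have mL : measurable L by rewrite /L; do 2 apply: measurableT_preimage => //.
have mL' : measurable L' by rewrite /L'; do 2 apply: measurableT_preimage => //.
have LL'0 : L `&` L' = set0.
  apply/seteqP; split=> // w; rewrite /L /L' /preimage /= in_itv /=.
  by move=> -[+ hc]; rewrite hc ltxx.
have PL_le : (P L <= p%:E)%E by exact: VaR_strict_le.
pose a := fine (P L).
have PLa : P L = a%:E by rewrite fineK ?fin_num_measure.
have PL'_ge : ((p - a)%:E <= P L')%E.
  have : (p%:E <= P (L `|` L'))%E.
    rewrite (_ : L `|` L' = (h \o X) @^-1` `]-oo, c]); first exact/VaR_leP.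
    apply/seteqP; split=> w; rewrite /L /L' /preimage /= ?in_itv /=.
      by case=> [/ltW|->].
    by rewrite le_eqVlt => /orP[/eqP|]; [right|left].
  by rewrite probabilityU // PLa EFinB leeBlDl.
have pa0 : 0 <= p - a by rewrite subr_ge0 -lee_fin -PLa.
have [B' mB' PB'] := exists_preimage_measure _ _ _ mX mL' X_atomless pa0 PL'_ge.
exists (h @^-1` `]-oo, c[ `|` (h @^-1` [set c] `&` B')), c; split.
- apply: measurableU; first exact: measurableT_preimage.
  by apply: measurableI => //; exact: measurableT_preimage.
- rewrite preimage_setU preimage_setI -/L -/L' probabilityU //.
  + by rewrite PLa PB' -EFinD addrC subrK.
  + by apply: measurableI => //; exact: measurableT_preimage.
  + by rewrite setIA LL'0 set0I.
- by apply: (VaR_ge0 _ _ _ mhX p01) => w; exact: h0.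
- by move=> x hx; left; rewrite /preimage /= in_itv.
- move=> x [|[]]; rewrite /preimage /= ?in_itv /=; first exact: ltW.
  by move=> ->.
Qed.

Lemma neyman_pearson_le (u : T -> R) (A A' : set T) (c : R) :
  measurable_fun setT u -> (forall w, 0 <= u w) ->
  measurable A -> measurable A' -> 0 <= c ->
  (forall w, u w < c -> A w) -> (forall w, A w -> u w <= c) ->
  (P A <= P A')%E ->
  (\int[P]_w (u w * \1_A w)%:E <= \int[P]_w (u w * \1_A' w)%:E)%E.
Proof.
move=> mfu u0 mA mA' c0 ltA Ale PAA'.
have mind (B : set T) : measurable B -> measurable_fun setT (fun w => u w * \1_B w).
  by move=> mB; apply: measurable_funM => //; exact: measurable_indic.
have mcind (B : set T) : measurable B -> measurable_fun setT (fun w => c * \1_B w).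
  by move=> mB; apply: measurable_funM => //; exact: measurable_indic.
have ind0 (B : set T) w : 0 <= u w * \1_B w by rewrite indicE mulr_ge0.
have cind0 (B : set T) w : 0 <= c * \1_B w by rewrite indicE mulr_ge0.
have pointwise w : u w * \1_A w + c * \1_A' w <= u w * \1_A' w + c * \1_A w.
  rewrite !indicE; have [Aw|nAw] := boolP (w \in A); have [A'w|nA'w] := boolP (w \in A');
    rewrite ?mulr1 ?mulr0 ?addr0 ?add0r //; first exact/Ale/set_mem.
  by rewrite leNgt; apply: contra nAw => /ltA /mem_set.
have NP : (\int[P]_w (u w * \1_A w + c * \1_A' w)%:E <=
           \int[P]_w (u w * \1_A' w + c * \1_A w)%:E)%E.
  apply: ge0_le_integral_EFin => // [||w]; last exact: addr_ge0.
  - exact: measurable_funD (mind _ mA) (mcind _ mA').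
  - exact: measurable_funD (mind _ mA') (mcind _ mA).
rewrite !ge0_integralD_EFin ?integral_scaled_indic // in NP; try by [apply: mind|apply: mcind].
have c0E : (0 <= c%:E)%E by rewrite lee_fin.
have := le_trans (leeD2l _ (lee_wpmul2l c0E PAA')) NP.
by rewrite leeD2rE // fin_numM ?fin_num_measure.
Qed.

End neyman_pearson.

Definition excess {R : realType} (gamma : R -> R) (t x : R) : R :=
  gamma x * Num.max (x - t) 0.

Lemma measurable_excess {R : realType} (gamma : R -> R) (t : R) :
  measurable_fun setT gamma -> measurable_fun setT (excess gamma t).
Proof.
move=> mgamma; apply: measurable_funM => //.
by apply: measurable_maxr => //; exact: measurable_funB.
Qed.

Section admissible_payoffs.
Context {d} {T : measurableType d} {R : realType} (P : probability T R).
Variables (X : T -> R) (gamma : R -> R) (x0 p : R).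
Hypotheses (mX : measurable_fun setT X) (X_ge0 : forall w, 0 <= X w).
Hypotheses (mgamma : measurable_fun setT gamma) (gamma_ge0 : forall x, 0 <= gamma x).
Hypothesis Egamma : (\int[P]_w (gamma (X w))%:E = 1)%E.
Hypothesis EgammaX_fin : (\int[P]_w (gamma (X w) * X w)%:E)%E \is a fin_num.
Hypothesis p01 : 0 < p < 1.

Local Notation G := (G_ns P X gamma x0).
Local Notation EgammaX := (\int[P]_w (gamma (X w) * X w)%:E)%E.

Let mgammaX : measurable_fun setT (fun w => gamma (X w)).
Proof. exact: measurableT_comp. Qed.

Let integral_gammaZ (k : R) : 0 <= k -> (\int[P]_w (k * gamma (X w))%:E = k%:E)%E.
Proof. by move=> k0; rewrite ge0_integralZl_EFinM // Egamma mule1. Qed.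

Lemma G_ns_id_minus (r : R -> R) : measurable_fun setT r ->
  (forall w, 0 <= r (X w) <= X w) ->
  (x0%:E + \int[P]_w (gamma (X w) * r (X w))%:E <= EgammaX)%E ->
  G (fun x => x - r x).
Proof.
move=> mr r_bnd budget; have r0 w := andP (r_bnd w).
have mgr : measurable_fun setT (fun w => gamma (X w) * r (X w)).
  by apply: measurable_funM => //; exact: measurableT_comp.
have mgXr : measurable_fun setT (fun w => gamma (X w) * (X w - r (X w))).
  apply: measurable_funM => //; apply: measurable_funB => //; exact: measurableT_comp.
have gr0 w : 0 <= gamma (X w) * r (X w) by rewrite mulr_ge0 // (r0 w).1.
have gXr0 w : 0 <= gamma (X w) * (X w - r (X w)) by rewrite mulr_ge0 // subr_ge0 (r0 w).2.
have Ir_fin : (\int[P]_w (gamma (X w) * r (X w))%:E)%E \is a fin_num.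
  rewrite ge0_fin_numE ?integral_ge0 // => [|w _]; last by rewrite lee_fin.
  apply: (@le_lt_trans _ _ EgammaX); last by rewrite ltey_eq EgammaX_fin.
  apply: ge0_le_integral_EFin => // [|w]; first exact: measurable_funM.
  by rewrite ler_wpM2l // (r0 w).2.
split.
- by apply: measurable_funB => //; exact: measurable_id.
- rewrite -(leeD2rE _ _ Ir_fin) -ge0_integralD_EFin //.
  by under eq_integral => w _ do rewrite -mulrDr subrK.
- by move=> w; have [rw0 rwX] := r0 w; rewrite subr_ge0 rwX gerBl rw0.
Qed.

Lemma G_ns_VaR_ge0 g : G g -> 0 <= VaR P p (fun w => g (X w)).
Proof.
case=> mg _ g_bnd; apply: VaR_ge0 => // [|w]; first exact: measurableT_comp.
by case/andP: (g_bnd w).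
Qed.

Let excess_ge0 t x : 0 <= excess gamma t x.
Proof. by rewrite mulr_ge0 // le_max lexx orbT. Qed.

Let VaR_set_lbound : has_lbound [set VaR P p (fun w => g (X w)) | g in G].
Proof. by exists 0 => _ [g Gg <-]; exact: G_ns_VaR_ge0. Qed.

Lemma integral_excess_sublevel_le g (t e : R) : G g -> 0 <= e ->
  (\int[P]_w (excess gamma t (X w) *
     \1_((fun w => g (X w)) @^-1` `]-oo, t + e]) w)%:E + x0%:E <= EgammaX + e%:E)%E.
Proof.
case=> mg Egg g_bnd e0; set A := (fun w => g (X w)) @^-1` `]-oo, t + e].
have mA : measurable A by apply: measurableT_preimage => //; exact: measurableT_comp.
have mhA : measurable_fun setT (fun w => excess gamma t (X w) * \1_A w).
  apply: measurable_funM; last exact: measurable_indic.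
  exact: measurableT_comp (measurable_excess _ _ mgamma) mX.
have mgg : measurable_fun setT (fun w => gamma (X w) * g (X w)).
  by apply: measurable_funM => //; exact: measurableT_comp.
have meg : measurable_fun setT (fun w => e * gamma (X w)) by exact: measurable_funM.
have hA0 w : 0 <= excess gamma t (X w) * \1_A w by rewrite indicE mulr_ge0.
have gg0 w : 0 <= gamma (X w) * g (X w) by rewrite mulr_ge0 //; case/andP: (g_bnd w).
have pointwise w : excess gamma t (X w) * \1_A w + gamma (X w) * g (X w) <=
                   gamma (X w) * X w + e * gamma (X w).
  rewrite /excess -mulrA (mulrC e) -!mulrDr ler_wpM2l //.
  have /andP[g0 gX] := g_bnd w; rewrite indicE.
  case: (boolP (w \in A)) => [/set_mem|_]; rewrite ?mulr1 ?mulr0 ?add0r; last lra.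
  by rewrite /A /preimage /= in_itv /= maxEle; case: ifP => _; lra.
have : (\int[P]_w (excess gamma t (X w) * \1_A w + gamma (X w) * g (X w))%:E <=
        \int[P]_w (gamma (X w) * X w + e * gamma (X w))%:E)%E.
  apply: ge0_le_integral_EFin => // [||w]; last exact: addr_ge0.
  - exact: measurable_funD.
  - by apply: measurable_funD => //; exact: measurable_funM.
have mgXX : measurable_fun setT (fun w => gamma (X w) * X w) by exact: measurable_funM.
have gXX0 w : 0 <= gamma (X w) * X w by rewrite mulr_ge0.
have eg0 w : 0 <= e * gamma (X w) by rewrite mulr_ge0.
rewrite !ge0_integralD_EFin ?integral_gammaZ //.
by apply: le_trans; exact: leeD2l.
Qed.

Lemma integral_excess_neyman_pearson_le (t c : R) (B : set R) :
  (forall e, 0 < e -> exists2 g, G g & VaR P p (fun w => g (X w)) <= t + e) ->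
  measurable B -> P (X @^-1` B) = p%:E -> 0 <= c ->
  (forall x, excess gamma t x < c -> B x) -> (forall x, B x -> excess gamma t x <= c) ->
  (\int[P]_w (excess gamma t (X w) * \1_(X @^-1` B) w)%:E + x0%:E <= EgammaX)%E.
Proof.
move=> VaR_near_t mB PB c0 ltB Ble; apply/lee_addgt0Pr => e e0.
have [g Gg VaRg] := VaR_near_t e e0; have [mg _ _] := Gg.
apply: (le_trans _ (integral_excess_sublevel_le _ t _ Gg (ltW e0))); apply: leeD2r.
apply: neyman_pearson_le c0 _ _ _ => //.
- exact: measurableT_comp (measurable_excess _ _ mgamma) mX.
- exact: measurableT_preimage.
- by apply: measurableT_preimage => //; exact: measurableT_comp.
- by move=> w /ltB.
- by move=> w /Ble.
- by rewrite PB; apply/VaR_leP => //; exact: measurableT_comp.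
Qed.

Lemma exists_VaR_minimizer :
  (forall t, P (X @^-1` [set t]) = 0%E) -> (x0%:E <= EgammaX)%E ->
  exists gstar, G gstar /\
    forall g, G g -> VaR P p (fun w => gstar (X w)) <= VaR P p (fun w => g (X w)).
Proof.
move=> X_atomless x0_le.
set S := [set VaR P p (fun w => g (X w)) | g in G].
have G_id : G (fun x => x).
  by split=> // w; rewrite lexx X_ge0.
have S_neq0 : S !=set0 by exists (VaR P p X), (fun x => x).
set q := inf S.
have q_le g : G g -> q <= VaR P p (fun w => g (X w)).
  by move=> Gg; apply: ge_inf => //; exists g.
have q_ge0 : 0 <= q by apply: lb_le_inf => // _ [g Gg <-]; exact: G_ns_VaR_ge0.
have VaR_near_q e : 0 < e -> exists2 g, G g & VaR P p (fun w => g (X w)) <= q + e.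
  move=> e0; have qe : q < q + e by rewrite ltrDl.
  have [_ [g Gg <-] VaRg] := inf_lt S_neq0 qe.
  by exists g => //; exact: ltW.
have [B [c [mB PB c0 ltB Ble]]] := exists_neyman_pearson_set P _ _ _ mX
  (measurable_excess _ q mgamma) (excess_ge0 q) X_atomless p01.
pose r x := Num.max (x - q) 0 * \1_B x.
have mr : measurable_fun setT r.
  apply: measurable_funM; last exact: measurable_indic.
  by apply: measurable_maxr => //; apply: measurable_funB.
have Gstar : G (fun x => x - r x).
  apply: G_ns_id_minus => // [w|].
    have max_le : Num.max (X w - q) 0 <= X w by rewrite ge_max gerBl q_ge0 X_ge0.
    by rewrite /r indicE; case: (_ \in _); rewrite ?mulr1 ?mulr0 ?le_max ?lexx ?orbT ?X_ge0.
  rewrite addeC; under eq_integral do rewrite /r mulrA.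
  exact: integral_excess_neyman_pearson_le VaR_near_q mB PB c0 ltB Ble.
exists (fun x => x - r x); split=> // g Gg; apply: le_trans (q_le g Gg).
have [mstar _ _] := Gstar.
apply/(VaR_leP _ _ _ (measurableT_comp mstar mX) p01).
rewrite -PB; apply: le_measure; rewrite ?inE.
- exact: measurableT_preimage.
- by apply: measurableT_preimage => //; exact: measurableT_comp.
move=> w XBw; rewrite /preimage /= in_itv /= /r indicE (mem_set (XBw : B (X w))) mulr1.
by rewrite lerBlDr -lerBlDl le_max lexx.
Qed.

Lemma inf_VaR_lt : P (X @^-1` [set 0]) = 0%E -> (x0%:E < EgammaX)%E ->
  inf [set VaR P p (fun w => g (X w)) | g in G] < VaR P p X.
Proof.
move=> X0_null x0_lt; set v := VaR P p X.
have v_gt0 : 0 < v by exact: VaR_gt0.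
set delta := Num.min v (fine EgammaX - x0).
have delta_gt0 : 0 < delta by rewrite lt_min v_gt0 subr_gt0 -lte_fin fineK.
have mmin : measurable_fun setT (fun x : R => Num.min x delta).
  by apply: measurable_minr => //; exact: measurable_id.
have Gdelta : G (fun x => x - Num.min x delta).
  apply: G_ns_id_minus => // [w|].
  - by rewrite le_min X_ge0 ltW //= ge_min lexx.
  apply: (@le_trans _ _ (x0 + delta)%:E).
    rewrite EFinD; apply: leeD2l; rewrite -[X in (_ <= X)%E](integral_gammaZ _ (ltW delta_gt0)).
    apply: ge0_le_integral_EFin => // [||w|w]; last 2 first.
    - by rewrite mulr_ge0 // le_min X_ge0 ltW.
    - by rewrite mulrC ler_wpM2r // ge_min lexx orbT.
    - exact: measurable_funM mgammaX (measurableT_comp mmin mX).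
    - exact: measurable_funM.
  by rewrite -(fineK EgammaX_fin) lee_fin -lerBrDl ge_min lexx orbT.
have VaR_delta : VaR P p (fun w => X w - Num.min (X w) delta) <= v - delta.
  have [mdelta _ _] := Gdelta.
  apply/(VaR_leP _ _ _ (measurableT_comp mdelta mX) p01).
  apply: le_trans ((VaR_leP _ _ _ mX p01 v).1 (lexx v)) _.
  apply: le_measure; rewrite ?inE.
  - exact: measurableT_preimage.
  - by apply: measurableT_preimage => //; exact: measurableT_comp.
  move=> w; rewrite /preimage /= !in_itv /= => Xv.
  have delta_le_v : delta <= v by rewrite ge_min lexx.
  by rewrite minEle; case: ifPn => _; [rewrite subrr subr_ge0 | rewrite lerD2r].
apply: le_lt_trans (ge_inf VaR_set_lbound _) _; first by exists (fun x => x - Num.min x delta).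
by apply: le_lt_trans VaR_delta _; rewrite ltrBlDr ltrDl.
Qed.

End admissible_payoffs.

Lemma density_no_atoms {d} {T : measurableType d} {R : realType}
    (P : probability T R) (X : T -> R) :
  has_pos_density_on_support P X -> forall t, P (X @^-1` [set t]) = 0%E.
Proof.
move=> [f [mf f0 Pf _]] t; rewrite Pf //; apply: null_set_integral => //.
  by apply/measurable_EFinP; exact: measurable_funS mf.
exact: lebesgue_measure_set1.
Qed.

Theorem lemma1 (d : measure_display) (T : measurableType d) (R : realType)
  (P : probability T R) (X : T -> R) (gamma : R -> R) (p x0 : R) :
  atomless P ->
  measurable_fun setT X ->
  (forall w, 0 <= X w) ->
  has_pos_density_on_support P X ->
  continuous gamma ->
  (forall x, 0 < gamma x) ->
  (\int[P]_w (gamma (X w))%:E = 1)%E ->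
  P.-integrable setT (fun w => (gamma (X w) * X w)%:E) ->
  0 < p < 1 ->
  0 <= x0 ->
  (x0%:E < \int[P]_w (gamma (X w) * X w)%:E)%E ->
  (exists gstar, G_ns P X gamma x0 gstar /\
     forall g, G_ns P X gamma x0 g ->
       VaR P p (fun w => gstar (X w)) <= VaR P p (fun w => g (X w)))
  /\ inf [set VaR P p (fun w => g (X w)) | g in G_ns P X gamma x0] < VaR P p X.
Proof.
move=> _ mX X_ge0 dens cgamma gamma_gt0 Egamma intgX p01 _ x0_lt.
have X_atomless := density_no_atoms _ _ dens.
have mgamma := continuous_measurable_fun cgamma.
have gamma_ge0 x := ltW (gamma_gt0 x).
have EgammaX_fin := integrable_fin_num measurableT intgX.
split; first exact: exists_VaR_minimizer (ltW x0_lt).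
exact: inf_VaR_lt.
Qed.
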